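(* Let $L$ be an $\mathbb{M}$-compositional family of lattice-closed logics. The class of all $L$-definable $\mathbb{M}$-algebras is a pseudo-variety.
   Context: Fix a set $\Xi$ of sorts; $\mathsf{Pos}^\Xi$: $\Xi$-sorted families of partial orders with sort-wise monotone maps. $\mathbb{M}$ is a monad on $\mathsf{Pos}^\Xi$ ($\mathrm{flat},\mathrm{sing}$) preserving injective, surjective, bijective functions and preimages and using the standard ordering. $\mathbb{M}$-algebras $\langle A,\pi\rangle$: $\pi\circ\mathbb{M}\pi=\pi\circ\mathrm{flat}$, $\pi\circ\mathrm{sing}=\mathrm{id}$. Finitary: sort-wise finite and finitely generated. A preorder $\sqsubseteq$ containing the order is a congruence ordering if $\mathbb{M}q(s)\leq\mathbb{M}q(t)\Rightarrow\pi(s)\sqsubseteq\pi(t)$, $q$ the quotient map onto the ordered set of classes. Quotient of $\mathfrak{B}$: codomain of a surjective morphism from $\mathfrak{B}$. For $\Delta\subseteq\Xi$: $A|_\Delta$ the part with sorts in $\Delta$, $\mathbb{M}|_\Delta A:=(\mathbb{M}(A|_\Delta))|_\Delta$, $\mathfrak{A}|_\Delta$ the $\mathbb{M}|_\Delta$-algebra with restricted product. $\mathfrak{B}$ is a sort-accumulation point of $\mathcal{A}$ if for every finite $\Delta\subseteq\Xi$ there is $\mathfrak{A}\in\mathcal{A}$ with $\mathfrak{B}|_\Delta$ a quotient of $\mathfrak{A}|_\Delta$. A pseudo-variety is a class of finitary algebras closed under quotients, finitary subalgebras of finite products and sort-accumulation points. Alphabet: finite unordered $\Sigma$. A logic: $\Xi$-sorted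 formulae and models with satisfaction; lattice closed if definable classes of each sort are closed under finite unions and intersections; for a set $\Delta$ of formulae, $M\sqsubseteq_\Delta N$ iff every formula of $\Delta$ true in $M$ is true in $N$. A family of logics $L$ assigns to each alphabet $\Sigma$ a logic $L[\Sigma]$ with models $\mathbb{M}\Sigma$, and to $f:\Sigma\to\Gamma$ a sort-preserving $\lambda_f:L[\Gamma]\to L[\Sigma]$ with $s\models\lambda_f(\varphi)\iff\mathbb{M}f(s)\models\varphi$. $K\subseteq\mathbb{M}_\xi\Sigma$ is $L$-definable if $K=\{s:s\models\varphi\}$ for some $\varphi\in L_\xi[\Sigma]$; for a finite ordered $C$, $K\subseteq\mathbb{M}C$ is $L$-definable if its preimage under $\mathbb{M}\iota$ ($\iota$ the identity from $C$ with trivial order to $C$) is. $L$ is $\mathbb{M}$-compositional if for every finite subfamily $\Phi\subseteq L$ (each $\Phi[\Sigma]$ finite) there is a subfamily $\Delta\supseteq\Phi$ with each $\Delta[\Sigma]$ finite in each sort (up to equivalence) such that $\sqsubseteq_{\Delta[\Sigma]}$ is a congruence ordering on $\mathbb{M}\Sigma$ for all $\Sigma$. A finite $C\subseteq A$ is $L$-definably embedded if $\pi^{-1}(\uparrow a)\cap\mathbb{M}C$ is $L$-definable for every $a\in A$; $\mathfrak{A}$ is $L$-definable if finitary and all its finite subsets are $L$-definably embedded. *)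

From Stdlib Require Import List FunctionalExtensionality PropExtensionality
  ProofIrrelevance.
Import ListNotations.

Set Implicit Arguments.
Unset Strict Implicit.

Record SPos (Xi : Type) := {
  car :> Type;
  srt : car -> Xi;
  le : car -> car -> Prop;
  le_refl : forall x, le x x;
  le_trans : forall x y z, le x y -> le y z -> le x z;
  le_antisym : forall x y, le x y -> le y x -> x = y;
  le_srt : forall x y, le x y -> srt x = srt y
}.
Arguments srt {Xi} s _.
Arguments le {Xi} s _ _.

Record Hom (Xi : Type) (A B : SPos Xi) := {
  hfun :> A -> B;
  hsrt : forall x, srt B (hfun x) = srt A x;
  hmono : forall x y, le A x y -> le B (hfun x) (hfun y)
}.

Definition idH (Xi : Type) (A : SPos Xi) : Hom A A.
Proof. refine {| hfun := fun x => x |}; auto. Defined.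

Definition compH (Xi : Type) (A B C : SPos Xi) (g : Hom B C) (f : Hom A B)
  : Hom A C.
Proof.
  refine {| hfun := fun x => g (f x) |}.
  - intro x; rewrite (hsrt g), (hsrt f); reflexivity.
  - intros x y H; apply (hmono g), (hmono f), H.
Defined.

Definition injective {X Y : Type} (f : X -> Y) := forall x y, f x = f y -> x = y.
Definition surjective {X Y : Type} (f : X -> Y) := forall y, exists x, f x = y.

Definition subS (Xi : Type) (A : SPos Xi) (P : A -> Prop) : SPos Xi.
Proof.
  refine {| car := {x : A | P x};
            srt := fun x => srt A (proj1_sig x);
            le := fun x y => le A (proj1_sig x) (proj1_sig y) |}.
  - intros; apply le_refl.
  - intros x y z; apply le_trans.
  - intros [x px] [y py] H1 H2; simpl in *.
    assert (x = y) by (apply le_antisym; auto). subst y.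
    f_equal; apply proof_irrelevance.
  - intros x y; apply le_srt.
Defined.

Definition incl (Xi : Type) (A : SPos Xi) (P : A -> Prop) : Hom (subS P) A.
Proof. refine {| hfun := fun x : subS P => proj1_sig x |}; auto. Defined.

(** The relation <= of A as a sorted set of pairs (sort of the pair = sort
    of its first component), carrying the trivial (discrete) order. *)
Definition relS (Xi : Type) (A : SPos Xi) : SPos Xi.
Proof.
  refine {| car := {p : A * A | le A (fst p) (snd p)};
            srt := fun p => srt A (fst (proj1_sig p));
            le := fun p q => p = q |}; intros; subst; auto.
Defined.

Definition relp0 (Xi : Type) (A : SPos Xi) : Hom (relS A) A.
Proof.
  refine {| hfun := fun p : relS A => fst (proj1_sig p) |}; simpl; intros; subst;
    auto using le_refl.
Defined.

Definition relp1 (Xi : Type) (A : SPos Xi) : Hom (relS A) A.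
Proof.
  refine {| hfun := fun p : relS A => snd (proj1_sig p) |}; simpl.
  - intros [[a b] H]; simpl; symmetry; apply le_srt, H.
  - intros; subst; apply le_refl.
Defined.

Definition prodS (Xi I : Type) (F : I -> SPos Xi) : SPos Xi.
Proof.
  refine {| car := {p : Xi * (forall i, F i) | forall i, srt (F i) (snd p i) = fst p};
            srt := fun p => fst (proj1_sig p);
            le := fun p q => fst (proj1_sig p) = fst (proj1_sig q) /\
                    forall i, le (F i) (snd (proj1_sig p) i) (snd (proj1_sig q) i) |}.
  - intros; split; auto using le_refl.
  - intros x y z [H1 H2] [H3 H4]; split; [congruence|].
    intro i; eapply le_trans; eauto.
  - intros [[a f] pf] [[b g] pg] [H1 H2] [H3 H4]; simpl in *. subst b.
    assert (f = g).
    { apply functional_extensionality_dep; intro i; apply le_antisym; auto. }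
    subst g. f_equal; apply proof_irrelevance.
  - intros x y [H _]; exact H.
Defined.

Definition projS (Xi I : Type) (F : I -> SPos Xi) (i : I) : Hom (prodS F) (F i).
Proof.
  refine {| hfun := fun p : prodS F => snd (proj1_sig p) i |}.
  - intros [p H]; apply H.
  - intros x y [_ H]; apply H.
Defined.

Record Monad (Xi : Type) := {
  M : SPos Xi -> SPos Xi;
  Mmap : forall A B : SPos Xi, Hom A B -> Hom (M A) (M B);
  sing : forall A, Hom A (M A);
  flat : forall A, Hom (M (M A)) (M A);
  Mmap_id : forall A (s : M A), Mmap (idH A) s = s;
  Mmap_comp : forall A B C (g : Hom B C) (f : Hom A B) (s : M A),
      Mmap (compH g f) s = Mmap g (Mmap f s);
  sing_nat : forall A B (f : Hom A B) (a : A), sing B (f a) = Mmap f (sing A a);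
  flat_nat : forall A B (f : Hom A B) (u : M (M A)),
      flat B (Mmap (Mmap f) u) = Mmap f (flat A u);
  flat_sing : forall A (s : M A), flat A (sing (M A) s) = s;
  flat_Msing : forall A (s : M A), flat A (Mmap (sing A) s) = s;
  flat_flat : forall A (w : M (M (M A))),
      flat A (flat (M A) w) = flat A (Mmap (flat A) w);
  Mmap_inj : forall A B (f : Hom A B), injective f -> injective (Mmap f);
  Mmap_surj : forall A B (f : Hom A B), surjective f -> surjective (Mmap f);
  Mmap_bij : forall A B (f : Hom A B),
      injective f /\ surjective f -> injective (Mmap f) /\ surjective (Mmap f);
  (* M preserves preimages: M(f^-1[C]) = (Mf)^-1[MC] *)
  Mmap_preim : forall A B (f : Hom A B) (P : B -> Prop) (s : M A),
      (exists t : M (subS P), Mmap (incl P) t = Mmap f s) ->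
      exists u : M (subS (fun a => P (f a))), Mmap (incl _) u = s;
  M_std_order : forall A (s t : M A),
      le (M A) s t <->
      exists u : M (relS A), Mmap (relp0 A) u = s /\ Mmap (relp1 A) u = t
}.
Arguments M {Xi} m _.
Arguments Mmap {Xi} m {A B} _.
Arguments sing {Xi} m A.
Arguments flat {Xi} m A.

Section Algebras.
Variable Xi : Type.
Variable Mo : Monad Xi.

Record Alg := {
  acar : SPos Xi;
  api : Hom (M Mo acar) acar;
  alg_assoc : forall s : M Mo (M Mo acar), api (Mmap Mo api s) = api (flat Mo acar s);
  alg_unit : forall a : acar, api (sing Mo acar a) = a
}.

Definition is_alg_morph (A B : Alg) (h : Hom (acar A) (acar B)) :=
  forall s : M Mo (acar A), h (api A s) = api B (Mmap Mo h s).

Definition finite_pred (T : Type) (P : T -> Prop) := exists l : list T, forall x, P x -> In x l.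

(** finitary = sort-wise finite and finitely generated *)
Definition finitary (A : Alg) :=
  (forall xi : Xi, finite_pred (fun a : acar A => srt (acar A) a = xi)) /\
  exists C : list (acar A), forall a : acar A,
    exists s : M Mo (subS (fun x => In x C)), api A (Mmap Mo (incl _) s) = a.

Definition quotient_of (B A : Alg) :=
  exists h : Hom (acar A) (acar B), is_alg_morph h /\ surjective h.

Definition prod_pi (I : Type) (A : I -> Alg) (s : M Mo (prodS (fun i => acar (A i))))
  : prodS (fun i => acar (A i)).
Proof.
  exists (srt _ s, fun i => api (A i) (Mmap Mo (projS (fun i => acar (A i)) i) s)).
  intro i; simpl. rewrite (hsrt (api (A i))), (hsrt (Mmap Mo _)). reflexivity.
Defined.

Definition embeds_in_product (B : Alg) (I : Type) (A : I -> Alg) :=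
  exists h : Hom (acar B) (prodS (fun i => acar (A i))),
    (forall s : M Mo (acar B), h (api B s) = @prod_pi I A (Mmap Mo h s)) /\
    injective h /\
    (forall x y, le _ (h x) (h y) -> le (acar B) x y).

(** Restriction to a set Delta of sorts: A|_Delta, with M|_Delta A :=
    (M(A|_Delta))|_Delta and the restricted product. *)
Definition restrS (A : SPos Xi) (D : Xi -> Prop) := subS (fun a : A => D (srt A a)).

Definition restr_quotient_of (D : Xi -> Prop) (B A : Alg) :=
  exists h : Hom (restrS (acar A) D) (restrS (acar B) D),
    surjective h /\
    forall (s : M Mo (restrS (acar A) D)), D (srt _ s) ->
      forall x : restrS (acar A) D,
        proj1_sig x = api A (Mmap Mo (incl _) s) ->
        proj1_sig (h x) = api B (Mmap Mo (incl _) (Mmap Mo h s)).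

Definition sort_accumulation_point (B : Alg) (K : Alg -> Prop) :=
  forall D : Xi -> Prop, finite_pred D ->
    exists A : Alg, K A /\ restr_quotient_of D B A.

Definition pseudo_variety (K : Alg -> Prop) :=
  (forall A, K A -> finitary A) /\
  (forall A B, K A -> quotient_of B A -> K B) /\
  (forall (B : Alg) (n : nat) (A : {i : nat | i < n} -> Alg),
      (forall i, K (A i)) -> embeds_in_product B A -> finitary B -> K B) /\
  (forall B : Alg, finitary B -> sort_accumulation_point B K -> K B).

Record preorder_on (A : SPos Xi) (R : A -> A -> Prop) : Prop := {
  po_refl : forall x, R x x;
  po_trans : forall x y z, R x y -> R y z -> R x z;
  po_srt : forall x y, R x y -> srt A x = srt A y;
  po_le : forall x y, le A x y -> R x y
}.

Definition cls (A : SPos Xi) (R : A -> A -> Prop) (a : A) : A -> Prop :=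
  fun b => R a b /\ R b a.

Lemma sig_eq (T : Type) (P : T -> Prop) (p q : {x : T | P x}) :
  proj1_sig p = proj1_sig q -> p = q.
Proof.
  destruct p as [x px], q as [y py]; simpl; intro E; subst y.
  f_equal; apply proof_irrelevance.
Qed.

Lemma cls_eq (A : SPos Xi) (R : A -> A -> Prop) (HR : preorder_on R) a b :
  cls R a = cls R b -> R a b /\ R b a.
Proof.
  intro E. assert (H : cls R b b) by (split; apply (po_refl HR)).
  rewrite <- E in H. exact H.
Qed.

Definition quotS (A : SPos Xi) (R : A -> A -> Prop) (HR : preorder_on R) : SPos Xi.
Proof.
  refine {| car := {p : Xi * (A -> Prop) | exists a, srt A a = fst p /\ snd p = cls R a};
            srt := fun p => fst (proj1_sig p);
            le := fun p q => exists a b, snd (proj1_sig p) = cls R a /\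
                                   snd (proj1_sig q) = cls R b /\ R a b |}.
  - intros [p Hp]; pose proof Hp as [a [_ H]]; exists a, a; simpl; rewrite H; repeat split; apply (po_refl HR).
  - intros [p Hp] [q Hq] [r Hr] [a [b [E1 [E2 R1]]]] [b' [c [E3 [E4 R2]]]]; simpl in *.
    exists a, c; repeat split; auto.
    rewrite E2 in E3. destruct (cls_eq HR E3) as [Hbb' _].
    eapply (po_trans HR); [exact R1|]. eapply (po_trans HR); eauto.
  - intros [[x P] HP] [[y Q] HQ] [a [b [E1 [E2 R1]]]] [b' [a' [E3 [E4 R2]]]];
    apply sig_eq; simpl in *.
    destruct HP as [a0 [Ea0 EP]]; destruct HQ as [b0 [Eb0 EQ]]; simpl in *.
    subst P Q. pose proof (po_trans HR) as T.
    destruct (cls_eq HR E1) as [Ha0a Haa0].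
    destruct (cls_eq HR E2) as [Hb0b Hbb0].
    destruct (cls_eq HR E3) as [Hb0b' Hb'b0].
    destruct (cls_eq HR E4) as [Ha0a' Ha'a0].
    assert (Rab : R a0 b0) by eauto.
    assert (Rba : R b0 a0) by eauto.
    assert (Hxy : x = y) by (rewrite <- Ea0, <- Eb0; apply (po_srt HR); exact Rab).
    assert (E : cls R a0 = cls R b0).
    { apply functional_extensionality; intro z; apply propositional_extensionality;
      unfold cls; split; intros [H1 H2]; split; eauto. }
    rewrite Hxy, E; reflexivity.
  - intros [[x P] [a0 [Ea0 EP]]] [[y Q] [b0 [Eb0 EQ]]] [a [b [E1 [E2 R1]]]]; simpl in *.
    subst P Q.
    destruct (cls_eq HR E1) as [Ha0a _].
    destruct (cls_eq HR E2) as [_ Hbb0].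
    rewrite <- Ea0, <- Eb0. apply (po_srt HR). pose proof (po_trans HR) as T; eauto.
Defined.

Definition quotq (A : SPos Xi) (R : A -> A -> Prop) (HR : preorder_on R)
  : Hom A (quotS HR).
Proof.
  refine {| hfun := fun a => exist _ (srt A a, cls R a) (ex_intro _ a (conj eq_refl eq_refl))
               : quotS HR |}.
  - reflexivity.
  - intros x y H; exists x, y; repeat split; auto. apply (po_le HR), H.
Defined.

Definition congruence_ordering (A : SPos Xi) (pi : M Mo A -> A) (R : A -> A -> Prop) :=
  exists HR : preorder_on R,
    forall s t : M Mo A,
      le _ (Mmap Mo (quotq HR) s) (Mmap Mo (quotq HR) t) -> R (pi s) (pi t).

End Algebras.

Record Alphabet (Xi : Type) := {
  asp :> SPos Xi;
  adisc : forall x y : asp, le asp x y <-> x = y;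
  afin : exists l : list asp, forall x, In x l
}.

Record Family (Xi : Type) (Mo : Monad Xi) := {
  form : Alphabet Xi -> Type;
  fsort : forall S, form S -> Xi;
  sat : forall S : Alphabet Xi, M Mo S -> form S -> Prop;
  lam : forall (S G : Alphabet Xi), Hom S G -> form G -> form S;
  lam_sort : forall (S G : Alphabet Xi) (f : Hom S G) (phi : form G), fsort (lam f phi) = fsort phi;
  lam_sat : forall (S G : Alphabet Xi) (f : Hom S G) (phi : form G) (s : M Mo S),
      sat s (lam f phi) <-> sat (Mmap Mo f s) phi
}.
Arguments form {Xi Mo} _ _.
Arguments fsort {Xi Mo} _ {S} _.
Arguments sat {Xi Mo} _ {S} _ _.

Section Logics.
Variable Xi : Type.
Variable Mo : Monad Xi.
Variable L : Family Mo.

Definition models (S : Alphabet Xi) (phi : form L S) (s : M Mo S) :=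
  srt _ s = fsort L phi /\ sat L s phi.

Definition lattice_closed (S : Alphabet Xi) :=
  (forall xi : Xi, exists phi : form L S, fsort L phi = xi /\ forall s, ~ models phi s) /\
  (forall xi : Xi, exists phi : form L S, fsort L phi = xi /\
      forall s, srt _ s = xi -> models phi s) /\
  (forall phi psi : form L S, fsort L phi = fsort L psi ->
     exists chi : form L S, fsort L chi = fsort L phi /\
       forall s, models chi s <-> models phi s \/ models psi s) /\
  (forall phi psi : form L S, fsort L phi = fsort L psi ->
     exists chi : form L S, fsort L chi = fsort L phi /\
       forall s, models chi s <-> models phi s /\ models psi s).

Definition theory_le (S : Alphabet Xi) (D : form L S -> Prop) (s t : M Mo S) :=
  srt _ s = srt _ t /\
  forall phi, D phi -> fsort L phi = srt _ s -> sat L s phi -> sat L t phi.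

Definition equiv_form (S : Alphabet Xi) (phi psi : form L S) :=
  fsort L phi = fsort L psi /\ forall s, models phi s <-> models psi s.

Definition compositional :=
  forall Phi : forall S : Alphabet Xi, form L S -> Prop,
    (forall S, finite_pred (Phi S)) ->
    exists Delta : forall S : Alphabet Xi, form L S -> Prop,
      (forall S phi, Phi S phi -> Delta S phi) /\
      (forall S (xi : Xi), exists l : list (form L S),
          forall phi, Delta S phi -> fsort L phi = xi ->
            exists psi, In psi l /\ equiv_form phi psi) /\
      (forall S : Alphabet Xi,
          congruence_ordering (flat Mo S) (theory_le (Delta S))).

Definition definable (S : Alphabet Xi) (K : M Mo S -> Prop) :=
  exists phi : form L S, forall s, K s <-> models phi s.

Definition discS (A : SPos Xi) (C : list A) : SPos Xi.
Proof.
  refine {| car := {x : A | In x C}; srt := fun x => srt A (proj1_sig x);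
            le := fun x y => x = y |}; intros; subst; auto.
Defined.

Fixpoint sig_list (T : Type) (l : list T) : list {x : T | In x l} :=
  match l return list {x : T | In x l} with
  | [] => []
  | x :: r => exist _ x (or_introl eq_refl)
      :: map (fun y : {x : T | In x r} => exist (fun z => In z (x :: r))
                 (proj1_sig y) (or_intror (proj2_sig y))) (sig_list r)
  end.

Lemma sig_list_complete (T : Type) (l : list T) (y : {x : T | In x l}) :
  In y (sig_list l).
Proof.
  induction l as [|a r IH]; destruct y as [x H]; [destruct H|].
  simpl. destruct H as [E|H].
  - subst x; left; f_equal; apply proof_irrelevance.
  - right. specialize (IH (exist _ x H)).
    apply (in_map (fun y : {x : T | In x r} => exist (fun z => In z (a :: r))
                 (proj1_sig y) (or_intror (proj2_sig y)))) in IH.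
    simpl in IH. replace (or_intror H) with (or_intror (A := a = x) H) in IH by reflexivity.
    exact IH.
Qed.

Definition discAlph (A : SPos Xi) (C : list A) : Alphabet Xi.
Proof.
  refine {| asp := discS C |}.
  - intros; simpl; tauto.
  - exists (sig_list C); intro x; apply sig_list_complete.
Defined.

Definition iotaH (A : SPos Xi) (C : list A) : Hom (discS C) (subS (fun x => In x C)).
Proof.
  refine {| hfun := fun x : discS C => (x : subS (fun x => In x C)) |}.
  - reflexivity.
  - intros x y E; simpl in E; subst; apply le_refl.
Defined.

Definition definable_ord (A : SPos Xi) (C : list A)
  (K : M Mo (subS (fun x => In x C)) -> Prop) :=
  definable (S := discAlph C) (fun u => K (Mmap Mo (iotaH C) u)).

Definition definably_embedded (A : Alg Mo) (C : list (acar A)) :=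
  forall a : acar A,
    definable_ord (C := C) (fun s => le _ a (api A (Mmap Mo (incl _) s))).

Definition L_definable_alg (A : Alg Mo) :=
  finitary A /\ forall C : list (acar A), definably_embedded C.

End Logics.

(* The upset tests {s in M C | b <= pi s} behind definable embeddedness
   transfer along the three closure operations.  For a surjective morphism
   h : A -> B, the test of b holds for s iff the lift of s to A passes the test
   of one of the finitely many a of the sort of b with b <= h a: a finite union.
   For a subalgebra of a finite product, it holds iff every projection passes
   its test: a finite intersection.  For a sort-accumulation point only the
   finitely many sorts of b and C matter, so a quotient on these sorts does the
   job.  In each case the lifted test lives on an image C' of C, and is pulled
   back to C by a substitution [lam]. *)

From Pilot Require Import Defs.
From Stdlib Require Import List Classical ClassicalEpsilon FunctionalExtensionality
  ProofIrrelevance Lia.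
Import ListNotations.

Set Implicit Arguments.
Unset Strict Implicit.

Lemma Hom_ext (Xi : Type) (A B : SPos Xi) (f g : Hom A B) :
  (forall x, f x = g x) -> f = g.
Proof.
  destruct f as [f fs fm], g as [g gs gm]; simpl; intro E.
  assert (f = g) by (apply functional_extensionality; exact E); subst g.
  f_equal; apply proof_irrelevance.
Qed.

Lemma Mmap_ext (Xi : Type) (Mo : Monad Xi) (A B : SPos Xi) (f g : Hom A B) :
  (forall x, f x = g x) -> forall s, Mmap Mo f s = Mmap Mo g s.
Proof. intros E s; rewrite (Hom_ext E); reflexivity. Qed.

Lemma api_Mmap_srt (Xi : Type) (Mo : Monad Xi) (A : Alg Mo) (X : SPos Xi)
  (f : Hom X (acar A)) (s : M Mo X) :
  srt (acar A) (api A (Mmap Mo f s)) = srt (M Mo X) s.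
Proof. exact (eq_trans (hsrt (api A) _) (hsrt (Mmap Mo f) s)). Qed.

Lemma ord_enum (n : nat) : exists l : list {i : nat | i < n}, forall i, In i l.
Proof.
  induction n as [|n [l Hl]].
  - exists []; intros [i Hi]; inversion Hi.
  - set (widen := fun i : {i | i < n} =>
           exist (fun i => i < S n) (proj1_sig i) (PeanoNat.Nat.lt_lt_succ_r _ _ (proj2_sig i))).
    exists (exist _ n (PeanoNat.Nat.lt_succ_diag_r n) :: map widen l).
    intros [i Hi]; destruct (PeanoNat.Nat.eq_dec i n) as [->|Hne].
    + left; apply sig_eq; reflexivity.
    + right; assert (Hin : i < n) by lia.
      replace (exist _ i Hi) with (widen (exist _ i Hin)) by (apply sig_eq; reflexivity).
      apply in_map, Hl.
Qed.

Section DiscreteMaps.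
Variable Xi : Type.

Definition discHom (X Y : SPos Xi) (C : list X) (f : discS C -> Y)
  (Hf : forall x, srt Y (f x) = srt (discS C) x) : Hom (discS C) Y.
Proof.
  refine {| hfun := f; hsrt := Hf |}.
  intros x y E; simpl in E; subst; apply le_refl.
Defined.

Definition discIncl (X : SPos Xi) (C : list X) : Hom (discS C) X :=
  compH (Defs.incl _) (iotaH C).

Definition discMap (X Y : SPos Xi) (C : list X) (f : Hom (discS C) Y)
  : Hom (discS C) (discS (map f (sig_list C))) :=
  discHom (f := fun x => exist (fun y => In y (map f (sig_list C))) (f x)
                       (in_map f _ _ (sig_list_complete x)) : discS _)
          (hsrt f).

End DiscreteMaps.

Section Definability.
Variables (Xi : Type) (Mo : Monad Xi) (L : Family Mo).

Lemma definable_ext (S : Alphabet Xi) (K K' : M Mo S -> Prop) :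
  definable L K -> (forall s, K s <-> K' s) -> definable L K'.
Proof. intros [phi H] E; exists phi; intro s; rewrite <- E; apply H. Qed.

Lemma definable_preim (S G : Alphabet Xi) (f : Hom S G) (K : M Mo G -> Prop) :
  definable L K -> definable L (fun s => K (Mmap Mo f s)).
Proof.
  intros [phi H]; exists (lam f phi); intro s; rewrite H.
  unfold models; rewrite (lam_sat (f0 := L)), (lam_sort (f0 := L)), (hsrt (Mmap Mo f)); tauto.
Qed.

Hypothesis LC : forall S : Alphabet Xi, lattice_closed L S.

Section BooleanClosure.
Variables (S : Alphabet Xi) (xi : Xi).

Lemma definable_empty : definable L (S := S) (fun _ => False).
Proof.
  destruct (proj1 (LC S) xi) as [phi [_ H]].
  exists phi; intro s; split; [tauto | apply H].
Qed.

Lemma definable_sort : definable L (S := S) (fun s => srt _ s = xi).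
Proof.
  destruct (proj1 (proj2 (LC S)) xi) as [phi [E H]].
  exists phi; intro s; split; [apply H | intros [Hs _]; congruence].
Qed.

(* An empty class is defined by a formula of any sort, hence the case split. *)
Lemma definable_of_sort (K : M Mo S -> Prop) :
  definable L K -> (forall s, K s -> srt _ s = xi) ->
  exists phi, fsort L phi = xi /\ forall s, K s <-> models phi s.
Proof.
  intros [phi H] Hs.
  destruct (classic (exists s, K s)) as [[s Ks] | NE].
  - exists phi; split; [|exact H].
    destruct (proj1 (H s) Ks) as [E _]; rewrite <- E; apply Hs, Ks.
  - destruct (proj1 (LC S) xi) as [psi [E H0]].
    exists psi; split; [exact E|].
    intro s; split; intro X; exfalso; [apply NE; eauto | eapply H0; eauto].
Qed.

Lemma definable_or (K1 K2 : M Mo S -> Prop) :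
  definable L K1 -> definable L K2 ->
  (forall s, K1 s -> srt _ s = xi) -> (forall s, K2 s -> srt _ s = xi) ->
  definable L (fun s => K1 s \/ K2 s).
Proof.
  intros D1 D2 H1 H2.
  destruct (definable_of_sort D1 H1) as [p1 [E1 F1]].
  destruct (definable_of_sort D2 H2) as [p2 [E2 F2]].
  destruct (proj1 (proj2 (proj2 (LC S))) p1 p2 ltac:(congruence)) as [chi [_ Hc]].
  exists chi; intro s; rewrite Hc, F1, F2; tauto.
Qed.

Lemma definable_and (K1 K2 : M Mo S -> Prop) :
  definable L K1 -> definable L K2 -> (forall s, K1 s -> srt _ s = xi) ->
  definable L (fun s => K1 s /\ K2 s).
Proof.
  intros D1 [p2 F2] H1.
  destruct (definable_of_sort D1 H1) as [p1 [E1 F1]].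
  destruct (classic (fsort L p2 = xi)) as [E2 | NE].
  - destruct (proj2 (proj2 (proj2 (LC S))) p1 p2 ltac:(congruence)) as [chi [_ Hc]].
    exists chi; intro s; rewrite Hc, F1, F2; tauto.
  - apply (definable_ext definable_empty); intro s; split; [tauto|].
    intros [X Y]; apply H1 in X; apply F2 in Y; destruct Y as [Y _]; congruence.
Qed.

Lemma definable_list_union (T : Type) (l : list T) (P : T -> M Mo S -> Prop) :
  (forall t, In t l -> definable L (P t)) ->
  (forall t s, In t l -> P t s -> srt _ s = xi) ->
  definable L (fun s => exists t, In t l /\ P t s).
Proof.
  induction l as [|t l IH]; intros HD HS.
  - apply (definable_ext definable_empty); intro s; split; [tauto|].
    intros [t [[] _]].
  - apply definable_ext with (K := fun s => P t s \/ exists t, In t l /\ P t s).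
    + apply definable_or.
      * apply HD; left; reflexivity.
      * apply IH; intros; [apply HD | eapply HS]; simpl; eauto.
      * intros; eapply HS; simpl; eauto.
      * intros s [t' [I X]]; eapply HS; simpl; eauto.
    + intro s; simpl; split.
      * intros [X | [t' [I X]]]; eauto.
      * intros [t' [[<- | I] X]]; eauto.
Qed.

Lemma definable_list_inter (T : Type) (l : list T) (P : T -> M Mo S -> Prop) :
  (forall t, In t l -> definable L (P t)) ->
  definable L (fun s => srt _ s = xi /\ forall t, In t l -> P t s).
Proof.
  induction l as [|t l IH]; intro HD.
  - apply (definable_ext definable_sort); intro s; simpl; intuition.
  - apply definable_ext
      with (K := fun s => (srt _ s = xi /\ forall t, In t l -> P t s) /\ P t s).
    + apply definable_and.
      * apply IH; intros; apply HD; right; assumption.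
      * apply HD; left; reflexivity.
      * tauto.
    + intro s; simpl; split.
      * intros [[E F] X]; split; [exact E|]; intros t' [<- | I]; auto.
      * intros [E F]; auto.
Qed.

End BooleanClosure.
End Definability.

Lemma quotient_finitary (Xi : Type) (Mo : Monad Xi) (A B : Alg Mo) :
  finitary A -> quotient_of B A -> finitary B.
Proof.
  intros [FS [CA HCA]] [h [Hm Hs]]; split.
  - intro xi; destruct (FS xi) as [l Hl]; exists (map h l); intros b Hb.
    destruct (Hs b) as [a <-]; apply in_map, Hl.
    rewrite <- (hsrt h); exact Hb.
  - exists (map h CA); intro b.
    destruct (Hs b) as [a <-]; destruct (HCA a) as [s <-].
    unshelve eset (k := _ : Hom (subS (fun x => In x CA)) (subS (fun y => In y (map h CA)))).
    { refine {| hfun := fun x : subS (fun x => In x CA) =>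
                  exist _ (h (proj1_sig x)) (in_map h _ _ (proj2_sig x))
                  : subS (fun y => In y (map h CA)) |}.
      - intro x; apply (hsrt h).
      - intros x y H; apply (hmono h), H. }
    exists (Mmap Mo k s); rewrite Hm, <- !Mmap_comp; f_equal; apply Mmap_ext; reflexivity.
Qed.

Section DefinableAlgebras.
Variables (Xi : Type) (Mo : Monad Xi) (L : Family Mo).

Lemma definably_embedded_intro (B : Alg Mo) (C : list (acar B)) :
  (forall b, definable L (S := discAlph C) (fun s => le _ b (api B (Mmap Mo (discIncl C) s)))) ->
  definably_embedded L C.
Proof.
  intros H b; apply (definable_ext (H b)); intro s.
  unfold discIncl; rewrite Mmap_comp; reflexivity.
Qed.

(* The test on [C] is the substitution instance, along [discMap f], of the
   test on the finite subset [f C] of [A]. *)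
Lemma definable_up_along (A : Alg Mo) (X : SPos Xi) (C : list X)
  (f : Hom (discS C) (acar A)) (a : acar A) :
  L_definable_alg L A ->
  definable L (S := discAlph C) (fun s => le _ a (api A (Mmap Mo f s))).
Proof.
  intros [_ DA].
  apply (definable_ext (definable_preim (S := discAlph C) (G := discAlph (map f (sig_list C)))
                          (discMap f) (DA _ a))).
  intro s; rewrite <- !Mmap_comp, (Mmap_ext (g := f)) by reflexivity; apply iff_refl.
Qed.

Lemma restr_morph_up (D : Xi -> Prop) (A B : Alg Mo)
  (h : Hom (restrS (acar A) D) (restrS (acar B) D)) :
  (forall s, D (srt _ s) -> forall x, proj1_sig x = api A (Mmap Mo (Defs.incl _) s) ->
     proj1_sig (h x) = api B (Mmap Mo (Defs.incl _) (Mmap Mo h s))) ->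
  forall b : acar B, D (srt _ b) -> forall s : M Mo (restrS (acar A) D),
  (exists pa : D (srt _ (api A (Mmap Mo (Defs.incl _) s))),
     le _ b (proj1_sig (h (exist (fun a => D (srt _ a)) _ pa)))) <->
  le _ b (api B (Mmap Mo (Defs.incl _) (Mmap Mo h s))).
Proof.
  intros Hm b Db s.
  assert (Srt : srt _ (api A (Mmap Mo (Defs.incl _) s)) = srt _ s) by apply api_Mmap_srt.
  split.
  - intros [pa Hb]; rewrite <- (Hm s (eq_ind _ D pa _ Srt) (exist _ _ pa) eq_refl); exact Hb.
  - intro Hb.
    assert (pa : D (srt _ (api A (Mmap Mo (Defs.incl _) s)))).
    { assert (Sb : srt _ b = srt _ s).
      { rewrite (le_srt Hb), api_Mmap_srt; apply (hsrt (Mmap Mo h)). }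
      rewrite Srt, <- Sb; exact Db. }
    exists pa; rewrite (Hm s (eq_ind _ D pa _ Srt) (exist _ _ pa) eq_refl); exact Hb.
Qed.

Hypothesis LC : forall S : Alphabet Xi, lattice_closed L S.

(* [P x] holds iff [a <= x] for one of the finitely many [a] of sort [xi]
   satisfying [P]. *)
Lemma definable_upset_along (A : Alg Mo) (X : SPos Xi) (C : list X)
  (f : Hom (discS C) (acar A)) (P : acar A -> Prop) (xi : Xi) :
  L_definable_alg L A ->
  (forall a a', P a -> le _ a a' -> P a') -> (forall a, P a -> srt _ a = xi) ->
  definable L (S := discAlph C) (fun s => P (api A (Mmap Mo f s))).
Proof.
  intros DA Pup Psrt; destruct (proj1 (proj1 DA) xi) as [l Hl].
  apply definable_ext
    with (K := fun s => exists a, In a l /\ (P a /\ le _ a (api A (Mmap Mo f s)))).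
  - apply (definable_list_union LC (xi := xi)).
    + intros a _; destruct (classic (P a)) as [Pa | NPa].
      * apply (definable_ext (definable_up_along f a DA)); tauto.
      * apply (definable_ext (definable_empty LC _ xi)); tauto.
    + intros a s _ [Pa Ha]; rewrite <- (Psrt a Pa), (le_srt Ha); symmetry; apply api_Mmap_srt.
  - intro s; split.
    + intros [a [_ [Pa Ha]]]; exact (Pup a _ Pa Ha).
    + intro Ps; exists (api A (Mmap Mo f s)); repeat split; auto using le_refl.
Qed.

Lemma quotient_closed (A B : Alg Mo) :
  L_definable_alg L A -> quotient_of B A -> L_definable_alg L B.
Proof.
  intros DA HBA; split; [exact (quotient_finitary (proj1 DA) HBA)|].
  destruct HBA as [h [Hm Hs]]; destruct (choice _ Hs) as [pre Hpre].
  intro C; apply definably_embedded_intro; intro b.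
  set (f := discHom (f := fun x => pre (discIncl C x))
                    (fun x => eq_trans (eq_sym (hsrt h _)) (f_equal _ (Hpre _)))).
  assert (Hf : forall s, Mmap Mo (discIncl C) s = Mmap Mo h (Mmap Mo f s)).
  { intro s; rewrite <- Mmap_comp; apply Mmap_ext; intro x; symmetry; apply Hpre. }
  apply (definable_ext (definable_upset_along (P := fun a => le _ b (h a)) (xi := srt _ b)
                          f DA (fun a a' Ha Haa' => le_trans Ha (hmono h Haa'))
                          (fun a Ha => eq_trans (eq_sym (hsrt h a)) (eq_sym (le_srt Ha))))).
  intro s; rewrite Hf, <- Hm; apply iff_refl.
Qed.

Lemma product_closed (B : Alg Mo) (n : nat) (A : {i : nat | i < n} -> Alg Mo) :
  (forall i, L_definable_alg L (A i)) -> embeds_in_product B A -> finitary B ->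
  L_definable_alg L B.
Proof.
  intros DA [h [Hm [_ Hrefl]]] FB; split; [exact FB|].
  intro C; apply definably_embedded_intro; intro b.
  destruct (ord_enum n) as [I HI].
  set (pj := projS (fun i => acar (A i))).
  set (f := fun i => compH (pj i) (compH h (discIncl C))).
  apply definable_ext with (K := fun s => srt _ s = srt _ b /\
    forall i, In i I -> le _ (pj i (h b)) (api (A i) (Mmap Mo (f i) s))).
  - apply (definable_list_inter LC); intros i _; apply definable_up_along, DA.
  - intro s; set (y := api B (Mmap Mo (discIncl C) s)).
    assert (Hf : forall i, api (A i) (Mmap Mo (f i) s) = pj i (h y)).
    { intro i; unfold y; rewrite Hm; unfold f; rewrite !Mmap_comp; reflexivity. }
    split.
    + intros [Hsrt Hle]; apply Hrefl; split.
      * change (srt _ (h b) = srt _ (h y)); rewrite !(hsrt h); unfold y.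
        rewrite api_Mmap_srt; symmetry; exact Hsrt.
      * intro i; change (le _ (pj i (h b)) (pj i (h y))); rewrite <- Hf; apply Hle, HI.
    + intro Hb; split.
      * rewrite (le_srt Hb); unfold y; symmetry; apply api_Mmap_srt.
      * intros i _; rewrite Hf; apply (hmono (pj i)), (hmono h), Hb.
Qed.

Lemma accumulation_closed (B : Alg Mo) :
  finitary B -> sort_accumulation_point B (L_definable_alg L) -> L_definable_alg L B.
Proof.
  intros FB SAP; split; [exact FB|].
  intro C; apply definably_embedded_intro; intro b.
  set (D := fun xi => xi = srt _ b \/ exists c, In c C /\ srt _ c = xi).
  destruct (SAP D) as [A [DA [h [Hs Hm]]]].
  { exists (srt _ b :: map (srt _) C).
    intros xi [E | [c [I <-]]]; [left; auto | right; apply in_map, I]. }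
  destruct (choice _ Hs) as [pre Hpre].
  set (e := discHom (f := fun x : discS C =>
              exist _ (proj1_sig x) (or_intror (ex_intro _ _ (conj (proj2_sig x) eq_refl)))
              : restrS (acar B) D) (fun _ => eq_refl)).
  set (g := discHom (f := fun x => pre (e x))
              (fun x => eq_trans (eq_sym (hsrt h _)) (f_equal (srt _) (Hpre (e x))))).
  set (P := fun a : acar A => exists pa : D (srt _ a),
              le _ b (proj1_sig (h (exist (fun a => D (srt _ a)) a pa)))).
  assert (HP : forall s', P (api A (Mmap Mo (Defs.incl _) s')) <->
                          le _ b (api B (Mmap Mo (Defs.incl _) (Mmap Mo h s'))))
    by exact (restr_morph_up Hm (b := b) (or_introl eq_refl)).
  apply definable_ext with (K := fun s => P (api A (Mmap Mo (compH (Defs.incl _) g) s))).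
  - apply (definable_upset_along (xi := srt _ b) _ DA).
    + intros a a' [pa Ha] Haa'.
      assert (pa' : D (srt _ a')) by (rewrite <- (le_srt Haa'); exact pa).
      exists pa'; apply (le_trans Ha).
      exact (hmono h (x := exist _ a pa) (y := exist _ a' pa') Haa').
    + intros a [pa Ha]; exact (eq_sym (eq_trans (le_srt Ha) (hsrt h _))).
  - intro s; rewrite Mmap_comp, HP.
    rewrite <- !Mmap_comp, (Mmap_ext (g := discIncl C)); [apply iff_refl|].
    intro x; simpl; rewrite Hpre; reflexivity.
Qed.

End DefinableAlgebras.

Theorem proposition9p10 (Xi : Type) (Mo : Monad Xi) (L : Family Mo) :
  compositional L ->
  (forall S : Alphabet Xi, lattice_closed L S) ->
  pseudo_variety (L_definable_alg L).
Proof.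
  intros _ LC; split; [|split; [|split]].
  - intros A DA; exact (proj1 DA).
  - exact (quotient_closed LC).
  - exact (product_closed LC).
  - exact (accumulation_closed LC).
Qed.
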